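(* Let $\mathcal A$ be finite, $r,\hat r:\mathcal A\to[0,1]$ with $r(a)\ge\hat r(a)$ for all $a\in\mathcal A$, $\eta>0$, and $\pi^{\mathrm{ref}}\in\Delta(\mathcal A)$ with $\pi^{\mathrm{ref}}(a)>0$ for all $a$. If $\hat\pi\in\arg\max_{\pi\in\Delta(\mathcal A)}J(\pi;\hat r)$, then $$\mathrm{SubOpt}(\hat\pi)=J(\pi^*;r)-J(\hat\pi;r)\le2\eta\sum_{a\in\mathcal A}\frac{\pi^*(a)^2}{\pi^{\mathrm{ref}}(a)}\big(r(a)-\hat r(a)\big)^2.$$
   Context: For $f:\mathcal A\to\mathbb R$, $J(\pi;f)=\sum_af(a)\pi(a)-\eta^{-1}\mathrm{KL}(\pi^{\mathrm{ref}}\|\pi)$, where $\mathrm{KL}(P\|Q)=\sum_aP(a)\log(P(a)/Q(a))$. $\pi^*$ denotes the (unique) maximizer of $J(\cdot;r)$ over $\Delta(\mathcal A)$. *)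

From HB Require Import structures.
From mathcomp Require Import all_boot all_order all_algebra.
From mathcomp Require Import all_classical all_reals all_analysis.
Set Implicit Arguments. Unset Strict Implicit. Unset Printing Implicit Defensive.
Import Order.TTheory GRing.Theory Num.Theory.
Local Open Scope ring_scope.

Definition simplex (R : realType) (A : finType) (p : A -> R) : Prop :=
  (forall a, 0 <= p a) /\ \sum_(a : A) p a = 1.

Definition KL (R : realType) (A : finType) (P Q : A -> R) : \bar R :=
  if [exists a, (0 < P a) && (Q a == 0)] then +oo%E
  else (\sum_(a : A) P a * ln (P a / Q a))%:E.

Definition J (R : realType) (A : finType) (eta : R) (pref : A -> R)
    (f : A -> R) (pi : A -> R) : \bar R :=
  ((\sum_(a : A) f a * pi a)%:E - (eta^-1)%:E * KL pref pi)%E.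

Definition is_argmax (R : realType) (A : finType) (eta : R) (pref : A -> R)
    (f : A -> R) (pi : A -> R) : Prop :=
  simplex pi /\ forall pi', simplex pi' -> (J eta pref f pi' <= J eta pref f pi)%E.

(* A maximizer of J(.; f) has full support: J(pi; f) = -oo as soon as pi vanishes
   somewhere, while J(pi_ref; f) is finite. On full-support policies J is finite and
   concave, so pihat satisfies the first-order condition
     sum_a (rhat a + pref a / (eta pihat a)) (pistar a - pihat a) <= 0.
   Subtracting it from J(pistar; r) - J(pihat; r) leaves, for each action, with
   t = pistar a / pihat a and d = r a - rhat a >= 0, the term
     d pihat a (t - 1) - (pref a / eta) (t - 1 - ln t),
   which is at most 2 eta pistar a^2 d^2 / pref a because
   t - 1 - ln t >= (sqrt t - 1)^2. *)

From HB Require Import structures.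
From mathcomp Require Import all_boot all_order all_algebra.
From mathcomp Require Import all_classical all_reals all_analysis.
From mathcomp Require Import ring lra.
Import Order.TTheory GRing.Theory Num.Theory.
Set Implicit Arguments. Unset Strict Implicit. Unset Printing Implicit Defensive.
Local Open Scope ring_scope.

Section Scalar.
Variable R : realType.
Implicit Types (x y t K c m d p eta G C : R).

Lemma ln_le_subr1 x : 0 < x -> ln x <= x - 1.
Proof. by move=> x_gt0; have := @le_ln1Dx R (x - 1); rewrite addrCA subrr addr0; apply; lra. Qed.

Lemma sqr_sqrt_subr1_le t : 0 < t ->
  (Num.sqrt t - 1) ^+ 2 <= t - 1 - ln t.
Proof.
move=> t_gt0; set m := Num.sqrt t.
have m_gt0 : 0 < m by rewrite sqrtr_gt0.
have -> : t = m ^+ 2 by rewrite sqr_sqrtr // ltW.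
rewrite lnXn // mulr2n; have := ln_le_subr1 m_gt0; nra.
Qed.

Lemma sqr_gap_le K c m : 0 < K -> 0 <= c -> 0 <= m ->
  c * (m ^+ 2 - 1) - K * (m - 1) ^+ 2 <= 2 * c ^+ 2 * m ^+ 4 / K.
Proof.
move=> K_gt0 c_ge0 m_ge0; rewrite ler_pdivlMr //.
have rhs_ge0 : 0 <= 2 * c ^+ 2 * m ^+ 4 by rewrite !mulr_ge0 ?exprn_ge0.
case: (lerP m 1) => [m_le1|m_gt1].
  apply: le_trans rhs_ge0; rewrite pmulr_lle0 // subr_le0.
  apply: le_trans (_ : 0 <= _); last by rewrite mulr_ge0 ?sqr_ge0 ?ltW.
  by rewrite mulr_ge0_le0 // subr_le0 expr_le1.
have amgm : (c * (m ^+ 2 - 1) - K * (m - 1) ^+ 2) * K <= c ^+ 2 * ((m + 1) / 2) ^+ 2.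
  have : 0 <= (K * (m - 1) - c * (m + 1) / 2) ^+ 2 by apply: sqr_ge0.
  nra.
have -> : 2 * c ^+ 2 * m ^+ 4 = c ^+ 2 * (2 * m ^+ 4) by ring.
apply: (le_trans amgm); apply: ler_wpM2l; first exact: sqr_ge0.
have half_le : (m + 1) / 2 <= m ^+ 2 by nra.
have : ((m + 1) / 2) ^+ 2 <= m ^+ 4.
  by rewrite (_ : 4 = 2 * 2)%N // exprM ler_pXn2r ?nnegrE //; nra.
have : 0 <= m ^+ 4 by rewrite exprn_ge0 // ltW.
lra.
Qed.

Lemma ln_gap_le K c t : 0 < K -> 0 <= c -> 0 < t ->
  c * (t - 1) - K * (t - 1 - ln t) <= 2 * c ^+ 2 * t ^+ 2 / K.
Proof.
move=> K_gt0 c_ge0 t_gt0; have gap := sqr_sqrt_subr1_le t_gt0.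
set m := Num.sqrt t in gap *.
have t_eq : t = m ^+ 2 by rewrite sqr_sqrtr // ltW.
have -> : t ^+ 2 = m ^+ 4 by rewrite t_eq -exprM.
apply: le_trans (sqr_gap_le K_gt0 c_ge0 (sqrtr_ge0 t)).
by rewrite -t_eq lerD2l lerN2 ler_wpM2l // ltW.
Qed.

Lemma ln1Dx_ge x : -1 / 2 <= x -> x - 2 * x ^+ 2 <= ln (1 + x).
Proof.
move=> x_ge; have Dx_gt0 : 0 < 1 + x by lra.
have : 0 < (1 + x)^-1 by rewrite invr_gt0.
move=> /ln_le_subr1; rewrite lnV ?posrE // => ln_ge.
suff : x - 2 * x ^+ 2 <= 1 - (1 + x)^-1 by lra.
rewrite -subr_ge0 (_ : _ - _ = x ^+ 2 * (1 + 2 * x) / (1 + x)); last by field; rewrite gt_eqF.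
by rewrite divr_ge0 ?(ltW Dx_gt0) // mulr_ge0 ?sqr_ge0 //; lra.
Qed.

Lemma suboptimality_term_le eta p x y d : 0 < eta -> 0 < p -> 0 < x -> 0 < y -> 0 <= d ->
  d * (y - x) + eta^-1 * (p * (ln y - ln x)) - eta^-1 * p / x * (y - x)
    <= 2 * eta * (y ^+ 2 / p * d ^+ 2).
Proof.
move=> eta_gt0 p_gt0 x_gt0 y_gt0 d_ge0.
have [x_neq0 p_neq0 eta_neq0] := And3 (gt_eqF x_gt0) (gt_eqF p_gt0) (gt_eqF eta_gt0).
have := ln_gap_le (divr_gt0 p_gt0 eta_gt0) (mulr_ge0 d_ge0 (ltW x_gt0)) (divr_gt0 y_gt0 x_gt0).
rewrite ln_div ?posrE //.
have -> : d * x * (y / x - 1) - p / eta * (y / x - 1 - (ln y - ln x))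
  = d * (y - x) + eta^-1 * (p * (ln y - ln x)) - eta^-1 * p / x * (y - x)
  by field; rewrite x_neq0 eta_neq0.
have -> : 2 * (d * x) ^+ 2 * (y / x) ^+ 2 / (p / eta) = 2 * eta * (y ^+ 2 / p * d ^+ 2).
  by field; rewrite ?x_neq0 ?p_neq0 ?eta_neq0.
done.
Qed.

Lemma le0_of_le_scaled G C : (forall s, 0 < s <= 1 / 2 -> G <= s * C) -> G <= 0.
Proof.
move=> G_le; rewrite leNgt; apply/negP => G_gt0.
have C_ge : 2 * G <= C by have := G_le (1 / 2); rewrite mulrC; lra.
have C_gt0 : 0 < C by lra.
have s_gt0 : 0 < G / (2 * C) by rewrite divr_gt0 //; lra.
have s_le : G / (2 * C) <= 1 / 2 by rewrite ler_pdivrMr; lra.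
have s_mulC : G / (2 * C) * C = G / 2 by field; rewrite gt_eqF.
have : G <= G / (2 * C) * C by apply: G_le; rewrite s_gt0 s_le.
by rewrite s_mulC; lra.
Qed.

End Scalar.

Section Objective.
Variables (R : realType) (A : finType).
Implicit Types (eta k : R) (p f pi x y z : A -> R).

Definition Jfin k p f pi := \sum_a f a * pi a - k * \sum_a p a * ln (p a / pi a).

Lemma J_EFin eta p f pi : (forall a, 0 < pi a) -> J eta p f pi = (Jfin eta^-1 p f pi)%:E.
Proof.
move=> pi_gt0; rewrite /J /KL; case: existsP => [[a /andP[_ /eqP pi_a0]]|_].
  by have := pi_gt0 a; rewrite pi_a0 ltxx.
by rewrite /Jfin EFinB EFinM.
Qed.

Lemma J_eqNy eta p f pi a : 0 < eta -> 0 < p a -> pi a = 0 -> J eta p f pi = -oo%E.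
Proof.
move=> eta_gt0 p_a_gt0 pi_a0; rewrite /J /KL; case: existsP => [_|[]].
  by rewrite gt0_muley ?lte_fin ?invr_gt0 // addeNy.
by exists a; rewrite p_a_gt0 pi_a0 eqxx.
Qed.

Lemma argmax_gt0 eta p f pi : 0 < eta -> simplex p -> (forall a, 0 < p a) ->
  is_argmax eta p f pi -> forall a, 0 < pi a.
Proof.
move=> eta_gt0 p_simplex p_gt0 [[pi_ge0 _] pi_max] a.
rewrite lt_neqAle pi_ge0 andbT; apply/negP => /eqP pi_a0.
have := pi_max p p_simplex.
by rewrite (J_eqNy f eta_gt0 (p_gt0 a) (esym pi_a0)) J_EFin // leeNy_eq.
Qed.

Lemma argmax_Jfin eta p f x : is_argmax eta p f x -> (forall a, 0 < x a) ->
  forall y, simplex y -> (forall a, 0 < y a) -> Jfin eta^-1 p f y <= Jfin eta^-1 p f x.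
Proof.
by move=> [_ x_max] x_gt0 y y_simplex y_gt0; rewrite -lee_fin -!J_EFin // x_max.
Qed.

Lemma Jfin_sub k p f x y : (forall a, 0 < p a) -> (forall a, 0 < x a) -> (forall a, 0 < y a) ->
  Jfin k p f y - Jfin k p f x
    = \sum_a (f a * (y a - x a) + k * (p a * (ln (y a) - ln (x a)))).
Proof.
move=> p_gt0 x_gt0 y_gt0.
rewrite /Jfin [RHS](eq_bigr (fun a => (f a * y a - k * (p a * ln (p a / y a)))
                               - (f a * x a - k * (p a * ln (p a / x a))))); last first.
  by move=> a _; rewrite !ln_div ?posrE //; ring.
by rewrite sumrB !big_split /= !sumrN -!mulr_sumr; ring.
Qed.

Lemma Jfin_argmax_dir_le0 k p f x y : 0 <= k -> (forall a, 0 < p a) ->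
  (forall a, 0 < x a) -> simplex x -> simplex y ->
  (forall z, simplex z -> (forall a, 0 < z a) -> Jfin k p f z <= Jfin k p f x) ->
  \sum_a (f a + k * p a / x a) * (y a - x a) <= 0.
Proof.
move=> k_ge0 p_gt0 x_gt0 [_ sum_x] [y_ge0 sum_y] x_max.
pose w a := (y a - x a) / x a.
apply: (@le0_of_le_scaled _ _ (2 * k * \sum_a p a * w a ^+ 2)) => s /andP[s_gt0 s_le].
pose z a := x a + s * (y a - x a).
have w_ge a : -1 <= w a.
  have := divr_ge0 (y_ge0 a) (ltW (x_gt0 a)).
  by rewrite /w mulrBl divff ?gt_eqF //; lra.
have z_eq a : z a = x a * (1 + s * w a) by rewrite /z /w; field; rewrite gt_eqF.
have sw_ge a : -1 / 2 <= s * w a by have := w_ge a; nra.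
have z_gt0 a : 0 < z a by rewrite z_eq mulr_gt0 //; have := sw_ge a; lra.
have z_simplex : simplex z.
  split=> [a|]; first exact: ltW.
  by rewrite /z big_split /= -mulr_sumr sumrB sum_x sum_y subrr mulr0 addr0.
have term_ge a : s * ((f a + k * p a / x a) * (y a - x a)) - s ^+ 2 * (2 * k * (p a * w a ^+ 2))
    <= f a * (z a - x a) + k * (p a * (ln (z a) - ln (x a))).
  have x_neq0 : x a != 0 by rewrite gt_eqF.
  have -> : s * ((f a + k * p a / x a) * (y a - x a)) - s ^+ 2 * (2 * k * (p a * w a ^+ 2))
      = s * (f a * (y a - x a)) + k * p a * (s * w a - 2 * (s * w a) ^+ 2).
    by rewrite /w; field.
  have -> : f a * (z a - x a) = s * (f a * (y a - x a)) by rewrite /z; ring.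
  rewrite z_eq lnM ?posrE ?x_gt0 //; last by have := sw_ge a; lra.
  rewrite addrAC subrr add0r mulrA lerD2l ler_wpM2l ?ln1Dx_ge //.
  by rewrite mulr_ge0 // ltW.
have := x_max z z_simplex z_gt0; rewrite -subr_le0 Jfin_sub // => Jz_le.
have := le_trans (ler_sum _ (fun a _ => term_ge a)) Jz_le.
rewrite sumrB -!mulr_sumr => dir_le0.
by rewrite -subr_le0 -(pmulr_rle0 _ s_gt0) mulrBr mulrA -expr2.
Qed.

End Objective.

Theorem lemma5p5 (R : realType) (A : finType) (r rhat : A -> R) (eta : R)
  (pref pistar pihat : A -> R) :
  (forall a, 0 <= rhat a <= 1) -> (forall a, 0 <= r a <= 1) ->
  (forall a, rhat a <= r a) ->
  0 < eta ->
  simplex pref -> (forall a, 0 < pref a) ->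
  is_argmax eta pref r pistar ->
  is_argmax eta pref rhat pihat ->
  (J eta pref r pistar - J eta pref r pihat <=
   (2 * eta * \sum_(a : A) (pistar a ^+ 2 / pref a) * (r a - rhat a) ^+ 2)%:E)%E.
Proof.
move=> _ _ rhat_le eta_gt0 pref_simplex pref_gt0 star_max hat_max.
have star_gt0 := argmax_gt0 eta_gt0 pref_simplex pref_gt0 star_max.
have hat_gt0 := argmax_gt0 eta_gt0 pref_simplex pref_gt0 hat_max.
have first_order :
    \sum_a (rhat a + eta^-1 * pref a / pihat a) * (pistar a - pihat a) <= 0.
  apply: Jfin_argmax_dir_le0 (argmax_Jfin hat_max hat_gt0) => //.
  - by rewrite invr_ge0 ltW.
  - exact: hat_max.1.
  - exact: star_max.1.
rewrite !J_EFin // -EFinB lee_fin Jfin_sub // mulr_sumr.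
rewrite -[X in X <= _]subr0; apply: le_trans (lerB (lexx _) first_order) _.
rewrite -sumrB; apply: ler_sum => a _.
have d_ge0 : 0 <= r a - rhat a by rewrite subr_ge0.
have := suboptimality_term_le eta_gt0 (pref_gt0 a) (hat_gt0 a) (star_gt0 a) d_ge0; lra.
Qed.
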